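(* Let $G\in\mathfrak D_4$ and let $\Upsilon\subseteq G$ be a subgraph isomorphic to the Mycielski–Grötzsch graph, with vertices labelled $a_j,b_j$ ($j\in\mathbb Z/5\mathbb Z$), $c$ as below. If $i\in\mathbb Z/5\mathbb Z$ and $q\in V(G)$ is adjacent to both $a_{i-1}$ and $a_{i+1}$, then $q$ is adjacent to $a_i$.
   Context: $\mathfrak D_4$ is the class of (finite) maximal triangle-free graphs satisfying property $\mathscr{D}_4$. Maximal triangle-free: no triangle, and adding any new edge creates a triangle. Property $\mathscr{D}_k$: for every $m\in\{1,\dots,k\}$ and every sequence $x_1,\dots,x_{3m}$ of (not necessarily distinct) vertices there is a vertex $y$ with $|\{i\in[3m]: x_iy\in E(G)\}|\ge m+1$. Mycielski–Grötzsch graph: vertices $a_j,b_j$ ($j\in\mathbb Z/5\mathbb Z$) and $c$; its edges are exactly all pairs $a_jc$, $a_jb_{j+2}$, $a_jb_{j-2}$, $b_jb_{j+2}$. *)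

From mathcomp Require Import all_boot all_algebra.
Set Implicit Arguments. Unset Strict Implicit. Unset Printing Implicit Defensive.
Import GRing.Theory.

Definition simple_graph (T : finType) (e : rel T) : Prop :=
  symmetric e /\ irreflexive e.

Definition triangle_free (T : finType) (e : rel T) : Prop :=
  forall x y z : T, ~ [&& e x y, e y z & e x z].

(* Maximal triangle-free: triangle-free, and adding any new edge (between
   distinct non-adjacent vertices) creates a triangle, i.e. the two
   endpoints have a common neighbour. *)
Definition maximal_triangle_free (T : finType) (e : rel T) : Prop :=
  triangle_free e /\
  forall u v : T, u != v -> ~~ e u v -> exists w : T, e u w && e w v.

Definition propD (k : nat) (T : finType) (e : rel T) : Prop :=
  forall m : nat, 1 <= m <= k ->
  forall x : 'I_(3 * m) -> T,
  exists y : T, m.+1 <= #|[set i : 'I_(3 * m) | e (x i) y]|.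

Definition in_frakD4 (T : finType) (e : rel T) : Prop :=
  simple_graph e /\ maximal_triangle_free e /\ propD 4 e.

(* A (not necessarily induced) subgraph of G isomorphic to the
   Mycielski–Grötzsch graph, with vertices a_j, b_j (j in Z/5Z) and c:
   the 11 vertices are pairwise distinct and all edges a_j c,
   a_j b_(j+2), a_j b_(j-2), b_j b_(j+2) are edges of G. *)
Definition MG_subgraph (T : finType) (e : rel T)
    (a b : 'Z_5 -> T) (c : T) : Prop :=
  [/\ injective a, injective b,
      (forall i j, a i != b j),
      (forall j, a j != c /\ b j != c) &
      (forall j : 'Z_5,
         [/\ e (a j) c, e (a j) (b (j + 2)%R), e (a j) (b (j - 2)%R)
           & e (b j) (b (j + 2)%R)])].

From mathcomp Require Import all_boot all_algebra.
Set Implicit Arguments. Unset Strict Implicit. Unset Printing Implicit Defensive.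
Import GRing.Theory.
Local Open Scope ring_scope.

(* Take i = 0.  If q is adjacent to a_1 and a_4 but not to a_0, maximality
   gives a common neighbour w of q and a_0.  Property D_3 applied to
   a_0, a_1, a_4, b_1, b_2, b_3, b_4, q, w gives a vertex y with four
   neighbours among them; as the neighbourhood of y is independent, these
   neighbours are {a_0, b_1, q}, {a_0, b_4, q}, {a_1, b_1, b_2, w} or
   {a_4, b_3, b_4, w}, and the reflection j |-> -j exchanges the first two
   and the last two.  In each case D_4 applied to twelve vertices, among
   them y, yields a vertex with five neighbours among them, which triangle
   freeness again rules out. *)

Lemma card_set_nth (T : Type) (P : pred T) (x0 : T) (s : seq T) (n : nat) :
  size s = n -> #|[set i : 'I_n | P (nth x0 s i)]| = count P s.
Proof.
move=> <-; rewrite cardsE cardE /enum_mem size_filter.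
rewrite -(count_map (fun i : 'I_(size s) => nth x0 s i)).
by rewrite -[in RHS](mkseq_nth x0 s) /mkseq -val_enum_ord -map_comp enumT.
Qed.

Definition grotzsch (T : finType) (e : rel T)
    (a0 a1 a2 a3 a4 b0 b1 b2 b3 b4 c : T) : bool :=
  [&& [&& e a0 c, e a1 c, e a2 c, e a3 c & e a4 c],
      [&& e a0 b2, e a1 b3, e a2 b4, e a3 b0 & e a4 b1],
      [&& e a0 b3, e a1 b4, e a2 b0, e a3 b1 & e a4 b2] &
      [&& e b0 b2, e b1 b3, e b2 b4, e b3 b0 & e b4 b1]].

Lemma grotzsch_at (T : finType) (e : rel T) (a b : 'Z_5 -> T) (c : T)
    (i : 'Z_5) :
  (forall j, [/\ e (a j) c, e (a j) (b (j + 2)), e (a j) (b (j - 2))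
               & e (b j) (b (j + 2))]) ->
  grotzsch e (a i) (a (i + 1)) (a (i + 2)) (a (i - 2)) (a (i - 1))
             (b i) (b (i + 1)) (b (i + 2)) (b (i - 2)) (b (i - 1)) c.
Proof.
move=> edges.
have edges_at k : [/\ e (a (i + k)) c, e (a (i + k)) (b (i + (k + 2))),
    e (a (i + k)) (b (i + (k - 2))) & e (b (i + k)) (b (i + (k + 2)))].
  by move: (edges (i + k)); rewrite -!addrA.
have [c0 h02 h03 g02] := edges_at 0.
have [c1 h13 h14 g13] := edges_at 1.
have [c2 h24 h20 g24] := edges_at 2.
have [c3 h30 h31 g30] := edges_at (-2).
have [c4 h41 h42 g41] := edges_at (-1).
have r1 : 1 + 2 = - 2 :> 'Z_5 by apply/eqP.
have r2 : 1 - 2 = - 1 :> 'Z_5 by apply/eqP.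
have r3 : 2 + 2 = - 1 :> 'Z_5 by apply/eqP.
have r4 : - 2 - 2 = 1 :> 'Z_5 by apply/eqP.
have r5 : - 1 + 2 = 1 :> 'Z_5 by apply/eqP.
have r6 : - 1 - 2 = 2 :> 'Z_5 by apply/eqP.
rewrite ?r1 ?r2 ?r3 ?r4 ?r5 ?r6 ?subrr ?addNr ?add0r ?sub0r ?addr0
  in c0 h02 h03 g02 c1 h13 h14 g13 c2 h24 h20 g24 c3 h30 h31 g30 c4 h41 h42 g41.
by rewrite /grotzsch c0 c1 c2 c3 c4 h02 h13 h24 h30 h41 h03 h14 h20 h31 h42
  g02 g13 g24 g30 g41.
Qed.

Lemma propD_count (T : finType) (e : rel T) (k m : nat) (s : seq T) :
  propD k e -> (1 <= m <= k)%N -> size s = (3 * m)%N ->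
  exists y, (m < count (e^~ y) s)%N.
Proof.
move=> e_Dk; case: s => [|x0 s] m_range size_s.
  by case: m m_range size_s => // m _; rewrite mulnS.
have [y le_m_card] := e_Dk m m_range (fun i => nth x0 (x0 :: s) i).
by exists y; rewrite -(card_set_nth _ x0 size_s).
Qed.

Lemma edge_no_common_nbr (T : finType) (e : rel T) u v :
  triangle_free e -> e u v -> forall z, ~~ (e u z && e v z).
Proof.
move=> e_tf e_uv z; apply/negP => /andP[e_uz e_vz].
by apply: (e_tf u v z); rewrite e_uv e_vz e_uz.
Qed.

Section GrotzschInD4.

Variables (T : finType) (e : rel T).
Hypotheses (e_sym : symmetric e) (e_mtf : maximal_triangle_free e)
  (e_D4 : propD 4 e).

(* The neighbourhood of z is independent, so z misses an end of every edge in
   the context; the adjacency patterns left over are then enumerated. *)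
Ltac exhaust_common_nbr z :=
  repeat match goal with
  | H : is_true (e ?u ?v) |- _ =>
      move: (edge_no_common_nbr e_mtf.1 H z); clear H
  end;
  repeat match goal with
  | |- context [e ?v z] => case: (e v z) => //
  end.

Lemma grotzsch_mirror a0 a1 a2 a3 a4 b0 b1 b2 b3 b4 c :
  grotzsch e a0 a1 a2 a3 a4 b0 b1 b2 b3 b4 c ->
  grotzsch e a0 a4 a3 a2 a1 b0 b4 b3 b2 b1 c.
Proof.
rewrite /grotzsch => /and4P[/and5P[-> -> -> -> ->] /and5P[-> -> -> -> ->]
  /and5P[-> -> -> -> ->]].
rewrite /= (e_sym b0 b3) (e_sym b4 b2) (e_sym b3 b1) (e_sym b2 b0)
  (e_sym b1 b4).
by case/and5P=> -> -> -> -> ->.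
Qed.

Lemma no_common_nbr_a0_b1_q a0 a1 a2 a3 a4 b0 b1 b2 b3 b4 c q y :
  grotzsch e a0 a1 a2 a3 a4 b0 b1 b2 b3 b4 c -> e q a4 -> e q a1 ->
  e a0 y -> e b1 y -> e q y -> False.
Proof.
case/and4P=> /and5P[? ? ? ? ?] /and5P[? ? ? ? ?] /and5P[? ? ? ? ?]
  /and5P[? ? ? ? ?] *.
have [z] := propD_count e_D4 (m := 4)
  (s := [:: y; a0; a1; a2; a4; b0; b1; b2; b3; b4; c; q]) isT erefl.
rewrite /=; exhaust_common_nbr z.
Qed.

Lemma no_common_nbr_a1_b1_b2_w a0 a1 a2 a3 a4 b0 b1 b2 b3 b4 c q w y :
  grotzsch e a0 a1 a2 a3 a4 b0 b1 b2 b3 b4 c -> e q a4 -> e q a1 ->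
  e q w -> e w a0 -> e a1 y -> e b1 y -> e b2 y -> e w y -> False.
Proof.
case/and4P=> /and5P[? ? ? ? ?] /and5P[? ? ? ? ?] /and5P[? ? ? ? ?]
  /and5P[? ? ? ? ?] *.
have [z] := propD_count e_D4 (m := 4)
  (s := [:: y; a0; a1; a3; a4; b0; b1; b2; b3; c; q; w]) isT erefl.
rewrite /=; exhaust_common_nbr z.
Qed.

Lemma grotzsch_common_nbr a0 a1 a2 a3 a4 b0 b1 b2 b3 b4 c q :
  grotzsch e a0 a1 a2 a3 a4 b0 b1 b2 b3 b4 c -> e q a4 -> e q a1 -> e q a0.
Proof.
move=> G q_a4 q_a1; apply/negPn/negP => not_q_a0.
have q_ne_a0 : q != a0.
  case/and4P: G => /and5P[a0_c _ _ _ a4_c] _ _ _.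
  apply: contraTneq q_a4 => ->; apply/negP => a0_a4.
  by have := edge_no_common_nbr e_mtf.1 a0_a4 c; rewrite a0_c a4_c.
have [w /andP[q_w w_a0]] := e_mtf.2 q a0 q_ne_a0 not_q_a0.
have [y large_nbr] := propD_count e_D4 (m := 3)
  (s := [:: a0; a1; a4; b1; b2; b3; b4; q; w]) isT erefl.
have : [|| [&& e a0 y, e b1 y & e q y], [&& e a0 y, e b4 y & e q y],
           [&& e a1 y, e b1 y, e b2 y & e w y]
         | [&& e a4 y, e b3 y, e b4 y & e w y]].
  move: large_nbr G; rewrite /grotzsch /= => + /and4P[/and5P[? ? ? ? ?]
    /and5P[? ? ? ? ?] /and5P[? ? ? ? ?] /and5P[? ? ? ? ?]].
  exhaust_common_nbr y.
case/or4P=> [/and3P[a0_y b1_y q_y] | /and3P[a0_y b4_y q_y]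
           | /and4P[a1_y b1_y b2_y w_y] | /and4P[a4_y b3_y b4_y w_y]].
- exact: no_common_nbr_a0_b1_q G q_a4 q_a1 a0_y b1_y q_y.
- exact: no_common_nbr_a0_b1_q (grotzsch_mirror G) q_a1 q_a4 a0_y b4_y q_y.
- exact: no_common_nbr_a1_b1_b2_w G q_a4 q_a1 q_w w_a0 a1_y b1_y b2_y w_y.
- exact: no_common_nbr_a1_b1_b2_w (grotzsch_mirror G) q_a1 q_a4 q_w w_a0
    a4_y b4_y b3_y w_y.
Qed.

End GrotzschInD4.

Theorem mainTheorem13 (T : finType) (e : rel T) (a b : 'Z_5 -> T) (c : T) :
  in_frakD4 e -> MG_subgraph e a b c ->
  forall (i : 'Z_5) (q : T),
    e q (a (i - 1)%R) -> e q (a (i + 1)%R) -> e q (a i).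
Proof.
move=> [[e_sym _] [e_mtf e_D4]] [_ _ _ _ edges] i q.
exact/grotzsch_common_nbr/(grotzsch_at i edges).
Qed.
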